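(* Let $H$ be the system defined in the context, and suppose the underlying graph is a line (path) graph on $N\ge 2$ nodes, with edges $\{i,i+1\}$, $i=1,\dots,N-1$, having susceptances $b_{i,i+1}>0$. Let $\underline{b}$ be the arithmetic mean of these $N-1$ edge susceptances. Then $$\|H\|_2^2\le\frac{\alpha}{2}(N-1)\left(\frac{1}{k_P}+\frac{1}{\tau_Q\left(\frac{c_Q}{2\underline{b}}+k_Q\right)}\right).$$
   Context: $L_B$ is the weighted Laplacian of the graph with edge weights $b_{ik}$. Parameters: $k_P,\tau_P,k_Q,\tau_Q>0$, $\bar b\ge 0$, $c_Q=1+2k_Q\bar b$, $\alpha>0$. $H$ is the LTI system with state $\psi=(\delta,\omega,V)\in\mathbb{R}^{3N}$, input $\mathrm{w}\in\mathbb{R}^{2N}$, output $y$: $$\dot\psi=\begin{bmatrix}0 & I & 0\\ -\frac{k_P}{\tau_P}L_B & -\frac{1}{\tau_P}I & 0\\ 0 & 0 & -\frac{c_Q}{\tau_Q}I-\frac{k_Q}{\tau_Q}L_B\end{bmatrix}\psi+\begin{bmatrix}0&0\\ \frac{1}{\tau_P}I & 0\\ 0 & \frac{1}{\tau_Q}I\end{bmatrix}\mathrm{w},\qquad y=\begin{bmatrix}\sqrt{\alpha}L_B^{1/2} & 0 & 0\\ 0&0&\sqrt{\alpha}L_B^{1/2}\end{bmatrix}\psi,$$ and $\|H\|_2^2$ is the squared $\mathcal{H}_2$ norm of its transfer function (finite since the single zero mode is unobservable and all other modes are stable). *)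

From Stdlib Require Import Reals Lra Lia.
Open Scope R_scope.

Fixpoint rsum (n : nat) (f : nat -> R) : R :=
  match n with O => 0 | S k => rsum k f + f k end.

(* matrices are functions nat -> nat -> R; dimensions are carried separately *)
Definition Mat := nat -> nat -> R.

Definition mmul (k : nat) (A B : Mat) : Mat :=
  fun i j => rsum k (fun l => A i l * B l j).

Definition eye : Mat := fun i j => if Nat.eqb i j then 1 else 0.

(* ---------- graph: path graph on N nodes (0-indexed) ----------
   b i = susceptance of the edge {i, i+1}, i = 0 .. N-2. *)
Definition path_w (b : nat -> R) (i j : nat) : R :=
  if Nat.eqb j (S i) then b i else if Nat.eqb i (S j) then b j else 0.

Definition lapB (N : nat) (b : nat -> R) : Mat :=
  fun i j => if Nat.eqb i j then rsum N (fun k => path_w b i k)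
             else - path_w b i j.

Definition is_psd_sqrt (N : nat) (L S : Mat) : Prop :=
  (forall i j, (i < N)%nat -> (j < N)%nat -> S i j = S j i) /\
  (forall x : nat -> R,
      0 <= rsum N (fun i => rsum N (fun j => x i * S i j * x j))) /\
  (forall i j, (i < N)%nat -> (j < N)%nat -> mmul N S S i j = L i j).

Definition cQ (kQ bbar : R) : R := 1 + 2 * kQ * bbar.

(* ---------- the system H: state (delta, omega, V) in R^{3N} ---------- *)
Definition sysA (N : nat) (L : Mat) (kP tP kQ tQ bbar : R) : Mat :=
  fun i j =>
    if Nat.ltb i N then
      (if Nat.eqb j (N + i) then 1 else 0)
    else if Nat.ltb i (2 * N) then
      (if Nat.ltb j N then - (kP / tP) * L (i - N)%nat j
       else if Nat.ltb j (2 * N) then (if Nat.eqb i j then - (1 / tP) else 0)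
       else 0)
    else
      (if Nat.ltb j (2 * N) then 0
       else - (cQ kQ bbar / tQ) * eye (i - 2 * N)%nat (j - 2 * N)%nat
            - (kQ / tQ) * L (i - 2 * N)%nat (j - 2 * N)%nat).

Definition sysB (N : nat) (tP tQ : R) : Mat :=
  fun i j =>
    if Nat.ltb i N then 0
    else if Nat.ltb i (2 * N) then (if Nat.eqb j (i - N) then 1 / tP else 0)
    else (if Nat.eqb j (i - N) then 1 / tQ else 0).

Definition sysC (N : nat) (S : Mat) (alpha : R) : Mat :=
  fun i j =>
    if Nat.ltb i N then
      (if Nat.ltb j N then sqrt alpha * S i j else 0)
    else
      (if Nat.ltb j (2 * N) then 0 else sqrt alpha * S (i - N)%nat (j - 2 * N)%nat).

Definition is_exp_flow (n : nat) (A : Mat) (Phi : R -> Mat) : Prop :=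
  (forall i j, (i < n)%nat -> (j < n)%nat -> Phi 0 i j = eye i j) /\
  (forall t i j, (i < n)%nat -> (j < n)%nat ->
     derivable_pt_lim (fun s => Phi s i j) t (mmul n A (Phi t) i j)).

Definition impulse_sq (n m p : nat) (A B C : Mat) (Phi : R -> Mat) (t : R) : R :=
  rsum p (fun i => rsum m (fun j => (mmul n (mmul n C (Phi t)) B i j) ^ 2)).

(* v = ||H||_2^2 = \int_0^\infty ||C e^{At} B||_F^2 dt  (time-domain H2 norm),
   the improper integral expressed via an antiderivative G with G 0 = 0
   and G T -> v as T -> +infinity. *)
Definition is_H2sq (n m p : nat) (A B C : Mat) (v : R) : Prop :=
  exists Phi : R -> Mat, is_exp_flow n A Phi /\
  exists G : R -> R, G 0 = 0 /\
    (forall t, derivable_pt_lim G t (impulse_sq n m p A B C Phi t)) /\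
    (forall eps, 0 < eps -> exists M, forall T, M <= T -> Rabs (G T - v) < eps).

Definition H_is_H2sq (N : nat) (b : nat -> R) (S : Mat)
  (kP tP kQ tQ bbar alpha v : R) : Prop :=
  is_H2sq (3 * N) (2 * N) (2 * N)
    (sysA N (lapB N b) kP tP kQ tQ bbar) (sysB N tP tQ) (sysC N S alpha) v.

Definition bmean (N : nat) (b : nat -> R) : R := rsum (N - 1) b / INR (N - 1).

From Stdlib Require Import Reals Lra Lia Classical.
From Coquelicot Require Import Coquelicot.
Open Scope R_scope.

(* The squared H2 norm is the output energy, integrated over [0, oo), of the 2N impulse
   responses e^{At} b_c, where the input column b_c is e_{N+c}/tau_P (a frequency input) or
   e_{2N+c}/tau_Q (a voltage input).  Along every trajectory z = (delta, omega, V) of the flow a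
   quadratic Lyapunov function W, nonnegative because L is positive semidefinite, decreases at
   least as fast as the output power alpha (delta' L delta + V' L V) is produced:
   - on the swing block, with kappa = k_P/tau_P, gamma = 1/tau_P and Pi the removal of the mean,
       W = alpha/(2 gamma) delta' L delta + alpha/(2 kappa gamma) |Pi (gamma delta + omega)|^2;
     as gamma delta + omega moves with velocity -kappa L delta, W' = -alpha delta' L delta exactly;
   - on the voltage block, W = alpha tau_Q/2 (u V' L V + w |Pi V|^2) with
     u = c_Q/(c_Q + k_Q m)^2 and w = k_Q m^2/(c_Q + k_Q m)^2, and the dissipation exceeds
     alpha V' L V by the square alpha c_Q k_Q/(c_Q + k_Q m)^2 |L V - m Pi V|^2.
   Hence the energy up to any time is at most sum_c W(b_c), which is
   alpha (N-1)/(2 k_P) + alpha/(2 tau_Q) (u tr L + w (N-1)).  On the path graph tr L = 2 sum b,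
   and m = 2 bmean turns this into the stated bound.  Being nondecreasing in time and bounded,
   the energy converges, so the norm exists. *)

Lemma rsum_ext n f g : (forall k, (k < n)%nat -> f k = g k) -> rsum n f = rsum n g.
Proof.
  induction n as [|n IH]; intros H; simpl; [reflexivity|].
  rewrite IH by (intros; apply H; lia). rewrite H by lia. reflexivity.
Qed.

Lemma rsum_plus n f g : rsum n (fun k => f k + g k) = rsum n f + rsum n g.
Proof. induction n as [|n IH]; simpl; [lra|]. rewrite IH; lra. Qed.

Lemma rsum_minus n f g : rsum n (fun k => f k - g k) = rsum n f - rsum n g.
Proof. induction n as [|n IH]; simpl; [lra|]. rewrite IH; lra. Qed.

Lemma rsum_mult_l n c f : rsum n (fun k => c * f k) = c * rsum n f.
Proof. induction n as [|n IH]; simpl; [lra|]. rewrite IH; lra. Qed.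

Lemma rsum_mult_r n c f : rsum n (fun k => f k * c) = rsum n f * c.
Proof. induction n as [|n IH]; simpl; [lra|]. rewrite IH; lra. Qed.

Lemma rsum_const n c : rsum n (fun _ => c) = INR n * c.
Proof. induction n as [|n IH]; simpl rsum; [simpl; lra|]. rewrite IH, S_INR; lra. Qed.

Lemma rsum_0 n : rsum n (fun _ => 0) = 0.
Proof. rewrite rsum_const; lra. Qed.

Lemma rsum_add_range a b f :
  rsum (a + b) f = rsum a f + rsum b (fun k => f (a + k)%nat).
Proof.
  induction b as [|b IH]; simpl; [rewrite Nat.add_0_r; lra|].
  rewrite Nat.add_succ_r; simpl. rewrite IH; lra.
Qed.

Lemma rsum_swap n m (f : nat -> nat -> R) :
  rsum n (fun i => rsum m (f i)) = rsum m (fun j => rsum n (fun i => f i j)).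
Proof.
  induction n as [|n IH]; simpl; [now rewrite rsum_0|].
  now rewrite IH, <- rsum_plus.
Qed.

Lemma rsum_kronecker n j f : (j < n)%nat ->
  rsum n (fun k => if Nat.eqb k j then f k else 0) = f j.
Proof.
  induction n as [|n IH]; intros Hj; [lia|]. simpl.
  destruct (Nat.eqb_spec n j) as [->|Hnj].
  - rewrite (rsum_ext _ _ (fun _ => 0)), rsum_0; [lra|].
    intros k Hk. destruct (Nat.eqb_spec k j); [lia|reflexivity].
  - rewrite IH by lia. lra.
Qed.

Lemma rsum_le n f g : (forall k, (k < n)%nat -> f k <= g k) -> rsum n f <= rsum n g.
Proof.
  induction n as [|n IH]; intros H; simpl; [lra|].
  apply Rplus_le_compat; [apply IH; intros k Hk|]; apply H; lia.
Qed.

Lemma rsum_nonneg n f : (forall k, (k < n)%nat -> 0 <= f k) -> 0 <= rsum n f.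
Proof. intros H. rewrite <- (rsum_0 n). now apply rsum_le. Qed.

Lemma rsum_term_le n f i : (i < n)%nat -> (forall k, (k < n)%nat -> 0 <= f k) ->
  f i <= rsum n f.
Proof.
  intros Hi H. rewrite <- (rsum_kronecker n i f Hi).
  apply rsum_le. intros k Hk. destruct (Nat.eqb k i); [lra|now apply H].
Qed.

Lemma Rabs_rsum_le n f : Rabs (rsum n f) <= rsum n (fun k => Rabs (f k)).
Proof.
  induction n as [|n IH]; simpl; [rewrite Rabs_R0; lra|].
  eapply Rle_trans; [apply Rabs_triang|lra].
Qed.

Lemma derivable_pt_lim_rsum n (f : R -> nat -> R) f' t :
  (forall k, (k < n)%nat -> derivable_pt_lim (fun s => f s k) t (f' k)) ->
  derivable_pt_lim (fun s => rsum n (f s)) t (rsum n f').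
Proof.
  induction n as [|n IH]; intros H; simpl; [apply derivable_pt_lim_const|].
  apply (derivable_pt_lim_plus (fun s => rsum n (f s)) (fun s => f s n));
    [apply IH; intros k Hk|]; apply H; lia.
Qed.

Lemma continuity_pt_rsum n (f : R -> nat -> R) t :
  (forall k, (k < n)%nat -> continuity_pt (fun s => f s k) t) ->
  continuity_pt (fun s => rsum n (f s)) t.
Proof.
  induction n as [|n IH]; intros H; simpl.
  - apply continuity_pt_const. now intros x y.
  - apply (continuity_pt_plus (fun s => rsum n (f s)) (fun s => f s n));
      [apply IH; intros k Hk|]; apply H; lia.
Qed.

Lemma rsum_3blocks n f g1 g2 g3 :
  (forall k, (k < n)%nat -> f k = g1 k) ->
  (forall k, (k < n)%nat -> f (n + k)%nat = g2 k) ->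
  (forall k, (k < n)%nat -> f (n + n + k)%nat = g3 k) ->
  rsum (3 * n) f = rsum n g1 + rsum n g2 + rsum n g3.
Proof.
  intros H1 H2 H3. replace (3 * n)%nat with (n + n + n)%nat by lia.
  rewrite !rsum_add_range.
  rewrite (rsum_ext n f g1), (rsum_ext n (fun k => f (n + k)%nat) g2),
    (rsum_ext n (fun k => f (n + n + k)%nat) g3) by assumption.
  reflexivity.
Qed.

Lemma rsum_2blocks n f g1 g2 :
  (forall k, (k < n)%nat -> f k = g1 k) ->
  (forall k, (k < n)%nat -> f (n + k)%nat = g2 k) ->
  rsum (2 * n) f = rsum n g1 + rsum n g2.
Proof.
  intros H1 H2. replace (2 * n)%nat with (n + n)%nat by lia.
  rewrite rsum_add_range, (rsum_ext n f g1), (rsum_ext n (fun k => f (n + k)%nat) g2)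
    by assumption.
  reflexivity.
Qed.

Definition is_vderiv (n : nat) (x : R -> nat -> R) (t : R) (x' : nat -> R) : Prop :=
  forall i, (i < n)%nat -> derivable_pt_lim (fun s => x s i) t (x' i).

Section Vectors.

Variable N : nat.

Definition dot (x y : nat -> R) : R := rsum N (fun i => x i * y i).
Definition mv (M : Mat) (x : nat -> R) : nat -> R := fun i => rsum N (fun j => M i j * x j).
Definition mean (x : nat -> R) : R := rsum N x / INR N.
Definition center (x : nat -> R) : nat -> R := fun i => x i - mean x.
Definition msym (M : Mat) : Prop := forall i j, (i < N)%nat -> (j < N)%nat -> M i j = M j i.

Lemma dot_ext x y x' y' : (forall i, (i < N)%nat -> x i = x' i) ->
  (forall i, (i < N)%nat -> y i = y' i) -> dot x y = dot x' y'.
Proof. intros Hx Hy. apply rsum_ext. intros i Hi. now rewrite Hx, Hy. Qed.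

Lemma dot_comm x y : dot x y = dot y x.
Proof. apply rsum_ext. intros. ring. Qed.

Lemma dot_self_nonneg x : 0 <= dot x x.
Proof. apply rsum_nonneg. intros. nra. Qed.

Lemma dot_0_l x y : (forall i, (i < N)%nat -> x i = 0) -> dot x y = 0.
Proof.
  intros H. unfold dot. rewrite <- (rsum_0 N). apply rsum_ext.
  intros i Hi. rewrite H by assumption. ring.
Qed.

Lemma dot_mv_sym M x y : msym M -> dot x (mv M y) = dot (mv M x) y.
Proof.
  intros HM. unfold dot, mv.
  transitivity (rsum N (fun i => rsum N (fun j => x i * M i j * y j))).
  - apply rsum_ext. intros. rewrite <- rsum_mult_l. apply rsum_ext. intros. ring.
  - rewrite rsum_swap. apply rsum_ext. intros. rewrite <- rsum_mult_r.
    apply rsum_ext. intros. rewrite HM by assumption. ring.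
Qed.

Lemma rsum_mv_rowsum0 M x : msym M ->
  (forall i, (i < N)%nat -> rsum N (M i) = 0) -> rsum N (mv M x) = 0.
Proof.
  intros HM Hrow. unfold mv. rewrite rsum_swap, <- (rsum_0 N).
  apply rsum_ext. intros j Hj. rewrite rsum_mult_r, <- (Rmult_0_l (x j)). f_equal.
  rewrite <- (Hrow j Hj). apply rsum_ext. intros k Hk. now apply HM.
Qed.

Lemma dot_center_l x y : rsum N y = 0 -> dot (center x) y = dot x y.
Proof.
  intros H. unfold dot, center.
  rewrite (rsum_ext _ _ (fun i => x i * y i - mean x * y i)) by (intros; ring).
  rewrite rsum_minus, rsum_mult_l, H. ring.
Qed.

Lemma rsum_center x : (0 < N)%nat -> rsum N (center x) = 0.
Proof.
  intros HN. unfold center, mean. rewrite rsum_minus, rsum_const.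
  assert (0 < INR N) by (apply lt_0_INR; lia). field. lra.
Qed.

Lemma dot_center_r x y : (0 < N)%nat -> dot (center x) (center y) = dot (center x) y.
Proof. intros HN. now rewrite dot_comm, dot_center_l, dot_comm by now apply rsum_center. Qed.

Lemma dot_center_0 x : (0 < N)%nat -> (forall i, (i < N)%nat -> x i = 0) ->
  dot (center x) (center x) = 0.
Proof. intros HN Hx. rewrite dot_center_r, dot_comm by assumption. now apply dot_0_l. Qed.

Lemma dot_center_unit x j : (j < N)%nat ->
  (forall i, (i < N)%nat -> x i = if Nat.eqb i j then 1 else 0) ->
  dot (center x) (center x) = 1 - 1 / INR N.
Proof.
  intros Hj Hx. rewrite dot_center_r by lia. unfold dot, center, mean.
  rewrite (rsum_ext N x (fun i => if Nat.eqb i j then 1 else 0)) by assumption.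
  rewrite (rsum_kronecker N j (fun _ => 1)) by assumption.
  rewrite <- (rsum_kronecker N j (fun _ => 1 - 1 / INR N)) by assumption.
  apply rsum_ext. intros i Hi. rewrite Hx by assumption. destruct (Nat.eqb i j); ring.
Qed.

Lemma dot_mv_sqrt S L x : msym S ->
  (forall i j, (i < N)%nat -> (j < N)%nat -> mmul N S S i j = L i j) ->
  dot (mv S x) (mv S x) = dot x (mv L x).
Proof.
  intros HS HSS. rewrite <- dot_mv_sym by assumption.
  apply dot_ext; [reflexivity|]. intros i Hi. unfold mv.
  transitivity (rsum N (fun j => rsum N (fun k => S i j * S j k * x k))).
  - apply rsum_ext. intros. rewrite <- rsum_mult_l. apply rsum_ext. intros. ring.
  - rewrite rsum_swap. apply rsum_ext. intros k Hk.
    rewrite <- HSS by assumption. unfold mmul. now rewrite <- rsum_mult_r.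
Qed.

Lemma derivable_pt_lim_dot (x y : R -> nat -> R) x' y' t :
  is_vderiv N x t x' -> is_vderiv N y t y' ->
  derivable_pt_lim (fun s => dot (x s) (y s)) t (dot x' (y t) + dot (x t) y').
Proof.
  intros Hx Hy. unfold dot. rewrite <- rsum_plus.
  apply (derivable_pt_lim_rsum N (fun s i => x s i * y s i)). intros i Hi.
  apply (derivable_pt_lim_mult (fun s => x s i) (fun s => y s i)); auto.
Qed.

Lemma is_vderiv_mv M x x' t :
  is_vderiv N x t x' -> is_vderiv N (fun s => mv M (x s)) t (mv M x').
Proof.
  intros Hx i _. apply (derivable_pt_lim_rsum N (fun s j => M i j * x s j)).
  intros j Hj. now apply derivable_pt_lim_scal, Hx.
Qed.

Lemma derivable_pt_lim_quad M x x' t : msym M -> is_vderiv N x t x' ->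
  derivable_pt_lim (fun s => dot (x s) (mv M (x s))) t (2 * dot x' (mv M (x t))).
Proof.
  intros HM Hx.
  replace (2 * dot x' (mv M (x t))) with (dot x' (mv M (x t)) + dot (x t) (mv M x')).
  - apply derivable_pt_lim_dot; [|apply is_vderiv_mv]; assumption.
  - rewrite (dot_mv_sym M (x t) x'), (dot_comm (mv M (x t))) by assumption. ring.
Qed.

Lemma is_vderiv_center x x' t :
  is_vderiv N x t x' -> is_vderiv N (fun s => center (x s)) t (center x').
Proof.
  intros Hx i Hi. unfold center, mean.
  apply (derivable_pt_lim_minus (fun s => x s i) (fun s => rsum N (x s) / INR N)); [now apply Hx|].
  apply (derivable_pt_lim_scal_right (fun s => rsum N (x s))). now apply derivable_pt_lim_rsum.
Qed.

Lemma derivable_pt_lim_center_sq x x' t : is_vderiv N x t x' ->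
  derivable_pt_lim (fun s => dot (center (x s)) (center (x s))) t
    (2 * dot (center (x t)) (center x')).
Proof.
  intros Hx. replace (2 * _) with (dot (center x') (center (x t)) + dot (center (x t)) (center x'))
    by (rewrite dot_comm; ring).
  apply derivable_pt_lim_dot; now apply is_vderiv_center.
Qed.

End Vectors.

Ltac dot_lin :=
  unfold dot; repeat (rewrite <- rsum_mult_l || rewrite <- rsum_plus || rewrite <- rsum_minus);
  apply rsum_ext; intros; ring.

(** * Calculus on the half-line *)

Lemma nondecreasing_of_derivative_nonneg (F F' : R -> R) :
  (forall t, derivable_pt_lim F t (F' t)) -> (forall t, 0 <= F' t) ->
  forall a b, a <= b -> F a <= F b.
Proof.
  intros HF HF' a b Hab. destruct (Rle_lt_or_eq_dec a b Hab) as [Hlt|<-]; [|lra].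
  destruct (MVT_cor2 F F' a b Hlt) as [c [Hc _]]; [intros; apply HF|].
  pose proof (HF' c). nra.
Qed.

Lemma antiderivative_le_of_lyapunov (G f h h' : R -> R) :
  G 0 = 0 -> (forall t, derivable_pt_lim G t (f t)) ->
  (forall t, derivable_pt_lim h t (h' t)) -> (forall t, f t + h' t <= 0) ->
  (forall t, 0 <= h t) -> forall T, 0 <= T -> G T <= h 0.
Proof.
  intros HG0 HG Hh Hdiss Hpos T HT.
  assert (Hmono : - (G 0 + h 0) <= - (G T + h T)).
  { apply (nondecreasing_of_derivative_nonneg (fun s => - (G s + h s)) (fun s => - (f s + h' s)));
      [|intros t; specialize (Hdiss t); lra | assumption].
    intros t. apply derivable_pt_lim_opp, derivable_pt_lim_plus; auto. }
  specialize (Hpos T). lra.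
Qed.

Lemma antiderivative_exists (f : R -> R) : (forall t, continuity_pt f t) ->
  exists G, G 0 = 0 /\ forall t, derivable_pt_lim G t (f t).
Proof.
  intros Hf. assert (Hc : forall t, continuous f t) by (intros; now apply continuity_pt_filterlim).
  exists (fun T => RInt f 0 T). split; [exact (RInt_point 0 f)|].
  intros t. apply is_derive_Reals, (is_derive_RInt f (fun T => RInt f 0 T) 0); [|apply Hc].
  apply filter_forall. intros x. apply (RInt_correct f), ex_RInt_continuous. intros; apply Hc.
Qed.

Lemma nondecreasing_bounded_cvg (G : R -> R) (B : R) :
  (forall a b, a <= b -> G a <= G b) -> (forall T, 0 <= T -> G T <= B) ->
  exists v, forall eps, 0 < eps -> exists M, forall T, M <= T -> Rabs (G T - v) < eps.
Proof.
  intros Hmono Hbound.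
  set (E y := exists T, 0 <= T /\ y = G T).
  destruct (completeness E) as [v [Hub Hlub]].
  - exists B. intros y [T [HT ->]]. now apply Hbound.
  - exists (G 0), 0. split; [lra|reflexivity].
  - exists v. intros eps Heps.
    assert (exists T0, 0 <= T0 /\ v - eps < G T0) as [T0 [HT0 HGT0]].
    { apply NNPP. intros Hno.
      assert (is_upper_bound E (v - eps)).
      { intros y [T [HT ->]]. apply Rnot_lt_le. intros Hlt. apply Hno. now exists T. }
      specialize (Hlub _ H). lra. }
    exists T0. intros T HT.
    assert (G T0 <= G T) by now apply Hmono.
    assert (G T <= v) by (apply Hub; exists T; split; [lra|reflexivity]).
    apply Rabs_def1; lra.
Qed.

Lemma cvg_le_of_bounded (G : R -> R) (v B : R) :
  (forall eps, 0 < eps -> exists M, forall T, M <= T -> Rabs (G T - v) < eps) ->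
  (forall T, 0 <= T -> G T <= B) -> v <= B.
Proof.
  intros Hlim Hbound. apply Rnot_lt_le. intros Hlt.
  destruct (Hlim (v - B)) as [M HM]; [lra|].
  specialize (HM (Rmax M 0) (Rmax_l M 0)). specialize (Hbound (Rmax M 0) (Rmax_r M 0)).
  apply Rabs_def2 in HM. lra.
Qed.

(** * Matrix exponential and impulse responses *)

Fixpoint mpow (n : nat) (A : Mat) (k : nat) : Mat :=
  match k with O => eye | S k => mmul n A (mpow n A k) end.

Definition mexp_coef (n : nat) (A : Mat) (i j : nat) (k : nat) : R :=
  mpow n A k i j / INR (Factorial.fact k).

Definition mexp (n : nat) (A : Mat) (t : R) : Mat :=
  fun i j => PSeries (mexp_coef n A i j) t.

Definition abs_sum (n : nat) (A : Mat) : R := rsum n (fun i => rsum n (fun l => Rabs (A i l))).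

Lemma Rabs_mpow_le n A k i j : (i < n)%nat -> Rabs (mpow n A k i j) <= abs_sum n A ^ k.
Proof.
  revert i j. induction k as [|k IH]; intros i j Hi; simpl.
  - unfold eye. destruct (Nat.eqb i j); rewrite ?Rabs_R1, ?Rabs_R0; lra.
  - unfold mmul. eapply Rle_trans; [apply Rabs_rsum_le|].
    apply Rle_trans with (rsum n (fun l => Rabs (A i l)) * abs_sum n A ^ k).
    + rewrite <- rsum_mult_r. apply rsum_le. intros l Hl. rewrite Rabs_mult.
      apply Rmult_le_compat_l; [apply Rabs_pos | now apply IH].
    + apply Rmult_le_compat_r.
      * apply pow_le, rsum_nonneg. intros. apply rsum_nonneg. intros. apply Rabs_pos.
      * apply (rsum_term_le n (fun i => rsum n (fun l => Rabs (A i l)))); [assumption|].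
        intros. apply rsum_nonneg. intros. apply Rabs_pos.
Qed.

Lemma mexp_coef_radius n A i j x : (i < n)%nat ->
  Rbar_lt (Rabs x) (CV_radius (mexp_coef n A i j)).
Proof.
  intros Hi. set (r := Rabs x + 1).
  assert (Hr : 0 <= r) by (unfold r; pose proof (Rabs_pos x); lra).
  apply Rbar_lt_le_trans with (Finite r); [simpl; unfold r; lra|].
  apply (proj1 (CV_radius_bounded (mexp_coef n A i j))).
  (* |coef_k| r^k <= (K r)^k / k!, a null and hence bounded sequence *)
  set (K := abs_sum n A). set (u k := (K * r) ^ k / INR (Factorial.fact k)).
  destruct (cauchy_bound u (CV_Cauchy u (exist _ 0 (cv_speed_pow_fact (K * r))))) as [M HM].
  exists M. intros k. apply Rle_trans with (u k); [|apply HM; now exists k].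
  unfold mexp_coef, u.
  rewrite Rabs_mult, Rabs_div, (Rabs_right (INR (Factorial.fact k))), <- RPow_abs,
    (Rabs_right r), Rpow_mult_distr by (apply Rle_ge, pos_INR || apply INR_fact_neq_0 || lra).
  unfold Rdiv. rewrite Rmult_assoc, (Rmult_comm (/ _)), <- Rmult_assoc.
  apply Rmult_le_compat_r; [apply Rlt_le, Rinv_0_lt_compat, INR_fact_lt_0|].
  rewrite !(Rmult_comm _ (r ^ k)). apply Rmult_le_compat_l; [now apply pow_le|].
  now apply Rabs_mpow_le.
Qed.

Lemma is_pseries_mmul n A i j t m : (m <= n)%nat ->
  is_pseries (fun k => rsum m (fun l => A i l * mexp_coef n A l j k)) t
    (rsum m (fun l => A i l * mexp n A t l j)).
Proof.
  induction m as [|m IH]; intros Hm.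
  - apply (is_series_ext (fun _ => 0)); [intros; symmetry; apply Rmult_0_r|].
    eapply filterlim_ext; [|apply filterlim_const].
    intros k. rewrite sum_n_const. symmetry. apply Rmult_0_r.
  - assert (Hm' : is_pseries (mexp_coef n A m j) t (mexp n A t m j)).
    { apply PSeries_correct, CV_radius_inside, mexp_coef_radius. lia. }
    apply (is_pseries_scal (A i m)) in Hm'; [|apply Rmult_comm].
    exact (is_pseries_plus _ _ _ _ _ (IH ltac:(lia)) Hm').
Qed.

Lemma exp_flow_exists n A : exists Phi, is_exp_flow n A Phi.
Proof.
  exists (mexp n A). split.
  - intros i j _ _. unfold mexp. rewrite PSeries_0. unfold mexp_coef. simpl. field.
  - intros t i j Hi Hj. apply is_derive_Reals.
    replace (mmul n A (mexp n A t) i j) with (PSeries (PS_derive (mexp_coef n A i j)) t).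
    + apply is_derive_PSeries, mexp_coef_radius, Hi.
    + rewrite (PSeries_ext _ (fun k => rsum n (fun l => A i l * mexp_coef n A l j k))).
      * apply is_pseries_unique, is_pseries_mmul. lia.
      * intros k. unfold PS_derive, mexp_coef. simpl mpow. unfold mmul, Rdiv.
        rewrite <- rsum_mult_r, <- (rsum_mult_l n (INR (S k))). apply rsum_ext. intros l _.
        change (Factorial.fact (S k)) with (S k * Factorial.fact k)%nat. rewrite mult_INR.
        field. split; [apply INR_fact_neq_0 | apply not_0_INR; lia].
Qed.

Definition col (Phi : R -> Mat) (t : R) (c : nat) : nat -> R := fun l => Phi t l c.

Lemma is_exp_flow_col n A Phi c t : is_exp_flow n A Phi -> (c < n)%nat ->
  is_vderiv n (fun s => col Phi s c) t (mv n A (col Phi t c)).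
Proof. intros [_ Hflow] Hc l Hl. now apply Hflow. Qed.

Lemma impulse_sq_continuous n m p A B C Phi t : is_exp_flow n A Phi ->
  continuity_pt (impulse_sq n m p A B C Phi) t.
Proof.
  intros [_ Hflow]. unfold impulse_sq.
  apply (continuity_pt_rsum p (fun s i => rsum m (fun j => mmul n (mmul n C (Phi s)) B i j ^ 2))).
  intros i _. apply (continuity_pt_rsum m (fun s j => mmul n (mmul n C (Phi s)) B i j ^ 2)).
  intros j _.
  assert (Hentry : continuity_pt (fun s => mmul n (mmul n C (Phi s)) B i j) t).
  { apply (continuity_pt_rsum n (fun s l => mmul n C (Phi s) i l * B l j)). intros l Hl.
    apply (continuity_pt_mult (fun s => mmul n C (Phi s) i l) (fun _ => B l j));
      [|apply continuity_pt_const; now intros].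
    apply (continuity_pt_rsum n (fun s l' => C i l' * Phi s l' l)). intros l' Hl'.
    apply (continuity_pt_scal (fun s => Phi s l' l)).
    apply derivable_continuous_pt. exists (mmul n A (Phi t) l' l). now apply Hflow. }
  apply (continuity_pt_mult _ (fun s => mmul n (mmul n C (Phi s)) B i j * 1)); [assumption|].
  apply continuity_pt_mult; [assumption|]. apply continuity_pt_const. now intros.
Qed.

Lemma impulse_sq_nonneg n m p A B C Phi t : 0 <= impulse_sq n m p A B C Phi t.
Proof. apply rsum_nonneg. intros. apply rsum_nonneg. intros. apply pow2_ge_0. Qed.

(** * Lyapunov functions of the swing and voltage dynamics *)

Definition volt_weight_u (c k m : R) : R := c / (c + k * m) ^ 2.
Definition volt_weight_w (c k m : R) : R := k * m ^ 2 / (c + k * m) ^ 2.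

Section Lyapunov.

Variables (N : nat) (L : Mat) (alpha : R).
Hypothesis N_pos : (0 < N)%nat.
Hypothesis L_sym : msym N L.
Hypothesis L_rowsum : forall i, (i < N)%nat -> rsum N (L i) = 0.

Lemma rsum_mv_L x : rsum N (mv N L x) = 0.
Proof. now apply rsum_mv_rowsum0. Qed.

Definition swing_lyap (kap gam : R) (x y : nat -> R) : R :=
  let u := center N (fun i => gam * x i + y i) in
  alpha / (2 * gam) * dot N x (mv N L x) + alpha / (2 * kap * gam) * dot N u u.

Lemma swing_lyap_deriv kap gam x y t : 0 < kap -> 0 < gam ->
  is_vderiv N x t (y t) ->
  is_vderiv N y t (fun i => - kap * mv N L (x t) i - gam * y t i) ->
  derivable_pt_lim (fun s => swing_lyap kap gam (x s) (y s)) t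
    (- alpha * dot N (x t) (mv N L (x t))).
Proof.
  intros Hk Hg Hx Hy. unfold swing_lyap.
  set (Lx := mv N L (x t)).
  set (u := fun i => gam * x t i + y t i). set (u' := fun i => - kap * Lx i).
  assert (Hu : is_vderiv N (fun s i => gam * x s i + y s i) t u').
  { intros i Hi. unfold u'. replace (- kap * Lx i) with (gam * y t i + (- kap * Lx i - gam * y t i))
      by ring.
    apply (derivable_pt_lim_plus (fun s => gam * x s i) (fun s => y s i));
      [apply derivable_pt_lim_scal|]; auto. }
  assert (Hcross : dot N (center N u) (center N u')
                   = - kap * (gam * dot N (x t) Lx + dot N (y t) Lx)).
  { assert (rsum N u' = 0) by (unfold u'; rewrite rsum_mult_l; unfold Lx; rewrite rsum_mv_L; ring).
    rewrite dot_center_r, dot_center_l by assumption. unfold u, u'. dot_lin. }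
  replace (- alpha * dot N (x t) Lx)
    with (alpha / (2 * gam) * (2 * dot N (y t) Lx)
          + alpha / (2 * kap * gam) * (2 * dot N (center N u) (center N u')))
    by (rewrite Hcross; field; lra).
  apply (derivable_pt_lim_plus (fun s => alpha / (2 * gam) * dot N (x s) (mv N L (x s))));
    apply derivable_pt_lim_scal.
  - now apply derivable_pt_lim_quad.
  - now apply (derivable_pt_lim_center_sq N (fun s i => gam * x s i + y s i)).
Qed.

Lemma swing_lyap_nonneg kap gam x y : (forall v, 0 <= dot N v (mv N L v)) ->
  0 <= alpha -> 0 < kap -> 0 < gam -> 0 <= swing_lyap kap gam x y.
Proof.
  intros Hpsd Ha Hk Hg. unfold swing_lyap.
  apply Rplus_le_le_0_compat; apply Rmult_le_pos; auto using dot_self_nonneg;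
    apply Rdiv_le_0_compat; nra.
Qed.

Definition volt_lyap (tau u w : R) (v : nat -> R) : R :=
  alpha * tau / 2 * (u * dot N v (mv N L v) + w * dot N (center N v) (center N v)).

Lemma volt_lyap_nonneg tau u w v : (forall v, 0 <= dot N v (mv N L v)) ->
  0 <= alpha -> 0 <= tau -> 0 <= u -> 0 <= w -> 0 <= volt_lyap tau u w v.
Proof.
  intros Hpsd Ha Ht Hu Hw. unfold volt_lyap.
  apply Rmult_le_pos; [apply Rdiv_le_0_compat; nra|].
  apply Rplus_le_le_0_compat; apply Rmult_le_pos; auto using dot_self_nonneg.
Qed.

Definition volt_rate (c k u w : R) (v : nat -> R) : R :=
  let Lv := mv N L v in
  - alpha * (u * (c * dot N v Lv + k * dot N Lv Lv)
             + w * (c * dot N (center N v) (center N v) + k * dot N v Lv)).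

Lemma volt_lyap_deriv tau c k u w v t : tau <> 0 ->
  is_vderiv N v t (fun i => - (c / tau) * v t i - (k / tau) * mv N L (v t) i) ->
  derivable_pt_lim (fun s => volt_lyap tau u w (v s)) t (volt_rate c k u w (v t)).
Proof.
  intros Ht Hv. unfold volt_lyap, volt_rate.
  set (Lv := mv N L (v t)). set (Pv := center N (v t)).
  set (v' := fun i => - (c / tau) * v t i - (k / tau) * Lv i).
  assert (E1 : dot N v' Lv = - (c / tau) * dot N (v t) Lv - (k / tau) * dot N Lv Lv).
  { unfold v'. dot_lin. }
  assert (E2 : dot N Pv (center N v') = - (c / tau) * dot N Pv Pv - (k / tau) * dot N (v t) Lv).
  { unfold Pv. rewrite dot_center_r by assumption. unfold v'.
    rewrite <- (dot_center_l N (v t) Lv) by apply rsum_mv_L.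
    rewrite (dot_center_r N (v t) (v t)) by assumption. dot_lin. }
  replace (- alpha * _)
    with (alpha * tau / 2 * (u * (2 * dot N v' Lv) + w * (2 * dot N Pv (center N v'))))
    by (rewrite E1, E2; field; assumption).
  apply derivable_pt_lim_scal.
  apply (derivable_pt_lim_plus (fun s => u * dot N (v s) (mv N L (v s))));
    apply derivable_pt_lim_scal.
  - now apply derivable_pt_lim_quad.
  - now apply derivable_pt_lim_center_sq.
Qed.

Lemma volt_rate_le c k m v : 0 < c -> 0 <= k -> 0 <= m -> 0 <= alpha ->
  volt_rate c k (volt_weight_u c k m) (volt_weight_w c k m) v + alpha * dot N v (mv N L v) <= 0.
Proof.
  intros Hc Hk Hm Ha. unfold volt_rate, volt_weight_u, volt_weight_w.
  set (Lv := mv N L v). set (Pv := center N v).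
  set (r := fun i => Lv i - m * Pv i).
  assert (Er : dot N r r = dot N Lv Lv - 2 * m * dot N v Lv + m ^ 2 * dot N Pv Pv).
  { rewrite <- (dot_center_l N v Lv) by apply rsum_mv_L. fold Pv. unfold r. dot_lin. }
  assert (HD : 0 < c + k * m) by nra.
  replace (_ + _) with (- (alpha * c * k / (c + k * m) ^ 2) * dot N r r)
    by (rewrite Er; field; lra).
  assert (0 <= alpha * c * k / (c + k * m) ^ 2)
    by (apply Rdiv_le_0_compat; [apply Rmult_le_pos; nra | apply pow_lt; lra]).
  pose proof (dot_self_nonneg N r). nra.
Qed.

End Lyapunov.

(** * The network model *)

Ltac nat_cases := repeat match goal with
  | |- context [Nat.ltb ?a ?b] => destruct (Nat.ltb_spec a b); try (exfalso; lia)
  | |- context [Nat.eqb ?a ?b] => destruct (Nat.eqb_spec a b); try (exfalso; lia)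
  end.

Definition omega_block (N : nat) (z : nat -> R) : nat -> R := fun i => z (N + i)%nat.
Definition volt_block (N : nat) (z : nat -> R) : nat -> R := fun i => z (N + N + i)%nat.

Definition output_cost (N : nat) (L : Mat) (alpha : R) (z : nat -> R) : R :=
  alpha * (dot N z (mv N L z) + dot N (volt_block N z) (mv N L (volt_block N z))).

Definition input_gain (N : nat) (tP tQ : R) (c : nat) : R :=
  if Nat.ltb c N then 1 / tP else 1 / tQ.

Section System.

Variables (N : nat) (L S : Mat) (kP tP kQ tQ bbar alpha : R).
Hypothesis N_pos : (0 < N)%nat.
Hypothesis L_sym : msym N L.
Hypothesis L_rowsum : forall i, (i < N)%nat -> rsum N (L i) = 0.
Hypothesis S_sym : msym N S.
Hypothesis S_sq : forall i j, (i < N)%nat -> (j < N)%nat -> mmul N S S i j = L i j.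
Hypotheses (kP_pos : 0 < kP) (tP_pos : 0 < tP) (kQ_pos : 0 < kQ) (tQ_pos : 0 < tQ).
Hypotheses (bbar_nonneg : 0 <= bbar) (alpha_pos : 0 < alpha).

Local Notation A := (sysA N L kP tP kQ tQ bbar).
Local Notation cQ' := (cQ kQ bbar).

Lemma sysA_delta_row z i : (i < N)%nat -> mv (3 * N) A z i = z (N + i)%nat.
Proof.
  intros Hi. unfold mv, sysA.
  rewrite (rsum_3blocks N _ (fun _ => 0) (fun k => if Nat.eqb k i then z (N + k)%nat else 0)
             (fun _ => 0)).
  - rewrite rsum_kronecker, !rsum_0 by assumption. ring.
  all: intros k Hk; nat_cases; ring.
Qed.

Lemma sysA_omega_row z i : (i < N)%nat ->
  mv (3 * N) A z (N + i)%nat = - (kP / tP) * mv N L z i - (1 / tP) * z (N + i)%nat.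
Proof.
  intros Hi. unfold mv at 1. unfold sysA.
  rewrite (rsum_3blocks N _ (fun k => - (kP / tP) * (L i k * z k))
             (fun k => if Nat.eqb k i then - (1 / tP) * z (N + k)%nat else 0) (fun _ => 0)).
  - rewrite rsum_kronecker, rsum_0, rsum_mult_l by assumption. unfold mv. ring.
  all: intros k Hk; nat_cases; replace (N + i - N)%nat with i by lia; ring.
Qed.

Lemma sysA_volt_row z i : (i < N)%nat ->
  mv (3 * N) A z (N + N + i)%nat
  = - (cQ' / tQ) * z (N + N + i)%nat - (kQ / tQ) * mv N L (volt_block N z) i.
Proof.
  intros Hi. unfold mv at 1. unfold sysA.
  rewrite (rsum_3blocks N _ (fun _ => 0) (fun _ => 0)
             (fun k => (if Nat.eqb k i then - (cQ' / tQ) * z (N + N + k)%nat else 0)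
                       - (kQ / tQ) * (L i k * volt_block N z k))).
  - rewrite rsum_minus, rsum_kronecker, !rsum_0, rsum_mult_l by assumption. unfold mv. ring.
  all: intros k Hk; nat_cases; replace (N + N + i - 2 * N)%nat with i by lia;
       try replace (N + N + k - 2 * N)%nat with k by lia; unfold eye, volt_block; nat_cases; ring.
Qed.

Lemma mmul_sysB M i c : (c < 2 * N)%nat ->
  mmul (3 * N) M (sysB N tP tQ) i c = M i (N + c)%nat * input_gain N tP tQ c.
Proof.
  intros Hc. unfold mmul.
  rewrite <- (rsum_kronecker (3 * N) (N + c) (fun l => M i l * input_gain N tP tQ c)) by lia.
  apply rsum_ext. intros l Hl. unfold sysB, input_gain. nat_cases; subst; ring.
Qed.

Lemma sysC_delta_row z i : (i < N)%nat ->
  mv (3 * N) (sysC N S alpha) z i = sqrt alpha * mv N S z i.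
Proof.
  intros Hi. unfold mv at 1. unfold sysC.
  rewrite (rsum_3blocks N _ (fun k => sqrt alpha * (S i k * z k)) (fun _ => 0) (fun _ => 0)).
  - rewrite !rsum_0, rsum_mult_l. unfold mv. ring.
  all: intros k Hk; nat_cases; ring.
Qed.

Lemma sysC_volt_row z i : (i < N)%nat ->
  mv (3 * N) (sysC N S alpha) z (N + i)%nat = sqrt alpha * mv N S (volt_block N z) i.
Proof.
  intros Hi. unfold mv at 1. unfold sysC.
  rewrite (rsum_3blocks N _ (fun _ => 0) (fun _ => 0)
             (fun k => sqrt alpha * (S i k * volt_block N z k))).
  - rewrite !rsum_0, rsum_mult_l. unfold mv. ring.
  all: intros k Hk; nat_cases; replace (N + i - N)%nat with i by lia;
       try replace (N + N + k - 2 * N)%nat with k by lia; unfold volt_block; ring.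
Qed.

Lemma output_energy z :
  rsum (2 * N) (fun i => mv (3 * N) (sysC N S alpha) z i ^ 2) = output_cost N L alpha z.
Proof.
  assert (Hsq : forall y, (sqrt alpha * y) ^ 2 = alpha * (y * y)).
  { intros y. rewrite <- (sqrt_sqrt alpha) at 2 by lra. ring. }
  rewrite (rsum_2blocks N _ (fun i => alpha * (mv N S z i * mv N S z i))
             (fun i => alpha * (mv N S (volt_block N z) i * mv N S (volt_block N z) i))).
  - rewrite !rsum_mult_l. unfold output_cost.
    rewrite <- (dot_mv_sqrt N S L z), <- (dot_mv_sqrt N S L (volt_block N z)) by assumption.
    unfold dot. ring.
  - intros i Hi. now rewrite sysC_delta_row.
  - intros i Hi. now rewrite sysC_volt_row.
Qed.

Lemma impulse_sq_columns A' Phi t :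
  impulse_sq (3 * N) (2 * N) (2 * N) A' (sysB N tP tQ) (sysC N S alpha) Phi t
  = rsum (2 * N) (fun c => input_gain N tP tQ c ^ 2 * output_cost N L alpha (col Phi t (N + c))).
Proof.
  unfold impulse_sq. rewrite rsum_swap. apply rsum_ext. intros c Hc.
  rewrite <- output_energy, <- rsum_mult_l. apply rsum_ext. intros i _.
  rewrite mmul_sysB by assumption. unfold mmul. unfold mv, col. ring.
Qed.

Definition lyap (m : R) (z : nat -> R) : R :=
  swing_lyap N L alpha (kP / tP) (1 / tP) z (omega_block N z)
  + volt_lyap N L alpha tQ (volt_weight_u cQ' kQ m) (volt_weight_w cQ' kQ m) (volt_block N z).

Definition lyap_rate (m : R) (z : nat -> R) : R :=
  - alpha * dot N z (mv N L z)
  + volt_rate N L alpha cQ' kQ (volt_weight_u cQ' kQ m) (volt_weight_w cQ' kQ m) (volt_block N z).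

Lemma lyap_deriv m z t : is_vderiv (3 * N) z t (mv (3 * N) A (z t)) ->
  derivable_pt_lim (fun s => lyap m (z s)) t (lyap_rate m (z t)).
Proof.
  intros Hz.
  apply (derivable_pt_lim_plus
           (fun s => swing_lyap N L alpha (kP / tP) (1 / tP) (z s) (omega_block N (z s)))).
  - apply swing_lyap_deriv; try assumption.
    + apply Rdiv_lt_0_compat; assumption.
    + apply Rdiv_lt_0_compat; lra.
    + intros i Hi. specialize (Hz i ltac:(lia)).
      rewrite sysA_delta_row in Hz by assumption. exact Hz.
    + intros i Hi. specialize (Hz (N + i)%nat ltac:(lia)).
      rewrite sysA_omega_row in Hz by assumption. exact Hz.
  - apply volt_lyap_deriv; try assumption; [lra|].
    intros i Hi. specialize (Hz (N + N + i)%nat ltac:(lia)).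
    rewrite sysA_volt_row in Hz by assumption. exact Hz.
Qed.

Lemma cQ_pos : 0 < cQ'.
Proof. unfold cQ. nra. Qed.

Lemma lyap_rate_le m z : 0 <= m -> lyap_rate m z + output_cost N L alpha z <= 0.
Proof.
  intros Hm. pose proof (volt_rate_le N L alpha L_sym L_rowsum cQ' kQ m (volt_block N z) cQ_pos).
  unfold lyap_rate, output_cost. lra.
Qed.

Lemma lyap_nonneg m z : 0 <= m -> 0 <= lyap m z.
Proof.
  intros Hm.
  assert (Hpsd : forall x, 0 <= dot N x (mv N L x))
    by (intros x; rewrite <- (dot_mv_sqrt N S L) by assumption; apply dot_self_nonneg).
  assert (HD : 0 < (cQ' + kQ * m) ^ 2) by (apply pow_lt; pose proof cQ_pos; nra).
  assert (0 <= volt_weight_u cQ' kQ m)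
    by (apply Rdiv_le_0_compat; [pose proof cQ_pos; lra | exact HD]).
  assert (0 <= volt_weight_w cQ' kQ m) 
    by (apply Rdiv_le_0_compat; [apply Rmult_le_pos; [lra | apply pow2_ge_0] | exact HD]).
  apply Rplus_le_le_0_compat.
  - apply swing_lyap_nonneg; try assumption; try lra; apply Rdiv_lt_0_compat; lra.
  - apply volt_lyap_nonneg; try assumption; lra.
Qed.

Lemma lyap_omega_unit m z j : (j < N)%nat ->
  (forall l, (l < 3 * N)%nat -> z l = eye l (N + j)%nat) ->
  lyap m z = alpha * tP ^ 2 / (2 * kP) * (1 - 1 / INR N).
Proof.
  intros Hj Hz. unfold lyap, swing_lyap, volt_lyap. cbv zeta.
  rewrite (dot_0_l N z), (dot_0_l N (volt_block N z)), (dot_center_0 N (volt_block N z))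
    by (try assumption; intros i Hi; unfold volt_block; rewrite Hz by lia;
        unfold eye; nat_cases; reflexivity).
  rewrite (dot_center_unit N _ j) by (try assumption; intros i Hi; unfold omega_block;
    rewrite !Hz by lia; unfold eye; nat_cases; ring).
  field. repeat split; try lra. apply not_0_INR. lia.
Qed.

Lemma lyap_volt_unit m z j : (j < N)%nat ->
  (forall l, (l < 3 * N)%nat -> z l = eye l (N + N + j)%nat) ->
  lyap m z
  = alpha * tQ / 2 * (volt_weight_u cQ' kQ m * L j j + volt_weight_w cQ' kQ m * (1 - 1 / INR N)).
Proof.
  intros Hj Hz.
  assert (Hv : forall i, (i < N)%nat -> volt_block N z i = if Nat.eqb i j then 1 else 0).
  { intros i Hi. unfold volt_block. rewrite Hz by lia. unfold eye. nat_cases; reflexivity. }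
  assert (HvLv : dot N (volt_block N z) (mv N L (volt_block N z)) = L j j).
  { unfold dot.
    rewrite (rsum_ext N _ (fun i => if Nat.eqb i j then mv N L (volt_block N z) j else 0)),
      rsum_kronecker by (try assumption; intros i Hi; rewrite Hv by assumption;
                         destruct (Nat.eqb_spec i j); subst; ring).
    unfold mv. rewrite <- (rsum_kronecker N j (L j)) by assumption.
    apply rsum_ext. intros k Hk. rewrite Hv by assumption. destruct (Nat.eqb k j); ring. }
  unfold lyap, swing_lyap, volt_lyap. cbv zeta.
  rewrite (dot_0_l N z), (dot_center_0 N) by (try assumption; intros i Hi; unfold omega_block;
    rewrite ?Hz by lia; unfold eye; nat_cases; ring).
  rewrite HvLv, (dot_center_unit N _ j) by assumption. ring.
Qed.

Lemma lyap_initial_columns m (Phi : R -> Mat) :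
  (forall i j, (i < 3 * N)%nat -> (j < 3 * N)%nat -> Phi 0 i j = eye i j) ->
  rsum (2 * N) (fun c => input_gain N tP tQ c ^ 2 * lyap m (col Phi 0 (N + c)))
  = alpha / 2 * (INR N - 1) / kP
    + alpha / (2 * tQ) * (volt_weight_u cQ' kQ m * rsum N (fun j => L j j)
                          + volt_weight_w cQ' kQ m * (INR N - 1)).
Proof.
  intros HPhi0.
  set (u := volt_weight_u cQ' kQ m). set (w := volt_weight_w cQ' kQ m).
  rewrite (rsum_2blocks N _ (fun _ => (1 / tP) ^ 2 * (alpha * tP ^ 2 / (2 * kP) * (1 - 1 / INR N)))
             (fun j => (1 / tQ) ^ 2 * (alpha * tQ / 2) * u * L j j
                       + (1 / tQ) ^ 2 * (alpha * tQ / 2) * w * (1 - 1 / INR N))).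
  - rewrite rsum_plus, !rsum_const, rsum_mult_l.
    field. repeat split; try lra. apply not_0_INR. lia.
  - intros c Hc. unfold input_gain. nat_cases.
    rewrite (lyap_omega_unit m _ c) by (try assumption; intros l Hl; apply HPhi0; lia).
    reflexivity.
  - intros j Hj. unfold input_gain. nat_cases. rewrite Nat.add_assoc.
    rewrite (lyap_volt_unit m _ j) by (try assumption; intros l Hl; apply HPhi0; lia).
    fold u w. ring.
Qed.

Lemma impulse_energy_le m Phi G : 0 <= m ->
  is_exp_flow (3 * N) A Phi -> G 0 = 0 ->
  (forall t, derivable_pt_lim G t
     (impulse_sq (3 * N) (2 * N) (2 * N) A (sysB N tP tQ) (sysC N S alpha) Phi t)) ->
  forall T, 0 <= T ->
  G T <= alpha / 2 * (INR N - 1) / kP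
         + alpha / (2 * tQ) * (volt_weight_u cQ' kQ m * rsum N (fun j => L j j)
                               + volt_weight_w cQ' kQ m * (INR N - 1)).
Proof.
  intros Hm Hflow HG0 HG.
  rewrite <- (lyap_initial_columns m Phi) by apply Hflow.
  set (w c := input_gain N tP tQ c ^ 2).
  apply (antiderivative_le_of_lyapunov G _
           (fun s => rsum (2 * N) (fun c => w c * lyap m (col Phi s (N + c))))
           (fun s => rsum (2 * N) (fun c => w c * lyap_rate m (col Phi s (N + c)))) HG0 HG).
  - intros t. apply (derivable_pt_lim_rsum (2 * N) (fun s c => w c * lyap m (col Phi s (N + c)))).
    intros c Hc. apply derivable_pt_lim_scal, lyap_deriv, is_exp_flow_col; [assumption | lia].
  - intros t. rewrite impulse_sq_columns by assumption. fold w.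
    rewrite <- rsum_plus, <- (rsum_0 (2 * N)). apply rsum_le. intros c _.
    pose proof (lyap_rate_le m (col Phi t (N + c)) Hm).
    pose proof (pow2_ge_0 (input_gain N tP tQ c)). unfold w. nra.
  - intros t. apply rsum_nonneg. intros c _.
    apply Rmult_le_pos; [apply pow2_ge_0 | now apply lyap_nonneg].
Qed.

End System.

(** * The path graph *)

Lemma path_w_sym b i j : path_w b i j = path_w b j i.
Proof. unfold path_w. nat_cases; reflexivity. Qed.

Lemma path_w_diag b i : path_w b i i = 0.
Proof. unfold path_w. nat_cases; reflexivity. Qed.

Lemma lapB_sym N b : msym N (lapB N b).
Proof. intros i j _ _. unfold lapB. nat_cases; subst; [reflexivity|]. now rewrite path_w_sym. Qed.

Lemma lapB_rowsum N b i : (i < N)%nat -> rsum N (lapB N b i) = 0.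
Proof.
  intros Hi. unfold lapB.
  rewrite (rsum_ext _ _ (fun j => (if Nat.eqb j i then rsum N (fun k => path_w b i k) else 0)
                                  - path_w b i j)).
  - rewrite rsum_minus, rsum_kronecker by assumption. apply Rminus_diag_eq. reflexivity.
  - intros k Hk. nat_cases; subst; rewrite ?path_w_diag; ring.
Qed.

Lemma rsum_path_w n b : rsum n (fun i => rsum n (path_w b i)) = 2 * rsum (n - 1) b.
Proof.
  induction n as [|n IH]; [simpl; ring|].
  simpl rsum at 1. rewrite rsum_plus, IH. simpl rsum. rewrite path_w_diag.
  destruct n as [|n]; [simpl; ring|].
  rewrite (rsum_ext (S n) (fun i => path_w b i (S n)) (fun i => if Nat.eqb i n then b i else 0)),
    (rsum_ext (S n) (path_w b (S n)) (fun k => if Nat.eqb k n then b k else 0)),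
    !rsum_kronecker by (lia || (intros k Hk; unfold path_w; nat_cases; subst; reflexivity)).
  replace (S (S n) - 1)%nat with (S n) by lia. replace (S n - 1)%nat with n by lia.
  simpl rsum. ring.
Qed.

Lemma rsum_lapB_diag N b : rsum N (fun j => lapB N b j j) = 2 * rsum (N - 1) b.
Proof.
  rewrite <- rsum_path_w. apply rsum_ext. intros. unfold lapB. now rewrite Nat.eqb_refl.
Qed.

Lemma h2_bound_closed_form alpha kP tQ c k n1 X :
  0 < n1 -> 0 < X -> 0 < c -> 0 < k -> 0 < kP -> 0 < tQ ->
  alpha / 2 * n1 / kP
  + alpha / (2 * tQ) * (volt_weight_u c k (2 * (X / n1)) * (2 * X)
                        + volt_weight_w c k (2 * (X / n1)) * n1)
  = alpha / 2 * n1 * (1 / kP + 1 / (tQ * (c / (2 * (X / n1)) + k))).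
Proof.
  intros Hn HX Hc Hk HkP HtQ. unfold volt_weight_u, volt_weight_w.
  assert (0 < c * n1 + 2 * k * X) by nra.
  field. repeat split; try lra; nra.
Qed.

Lemma path_impulse_energy_le N b S kP tP kQ tQ bbar alpha Phi G :
  (2 <= N)%nat -> (forall i, (i < N - 1)%nat -> 0 < b i) ->
  0 < kP -> 0 < tP -> 0 < kQ -> 0 < tQ -> 0 <= bbar -> 0 < alpha ->
  is_psd_sqrt N (lapB N b) S ->
  is_exp_flow (3 * N) (sysA N (lapB N b) kP tP kQ tQ bbar) Phi -> G 0 = 0 ->
  (forall t, derivable_pt_lim G t (impulse_sq (3 * N) (2 * N) (2 * N)
     (sysA N (lapB N b) kP tP kQ tQ bbar) (sysB N tP tQ) (sysC N S alpha) Phi t)) ->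
  forall T, 0 <= T ->
  G T <= alpha / 2 * INR (N - 1) * (1 / kP + 1 / (tQ * (cQ kQ bbar / (2 * bmean N b) + kQ))).
Proof.
  intros HN Hb HkP HtP HkQ HtQ Hbb Ha [HSsym [_ HSsq]] Hflow HG0 HG T HT.
  assert (HX : 0 < rsum (N - 1) b).
  { replace (N - 1)%nat with (Datatypes.S (N - 2)) by lia. simpl.
    pose proof (Hb (N - 2)%nat ltac:(lia)).
    assert (0 <= rsum (N - 2) b) by (apply rsum_nonneg; intros; apply Rlt_le, Hb; lia). lra. }
  assert (Hn1 : INR N - 1 = INR (N - 1)) by (rewrite minus_INR by lia; reflexivity).
  assert (0 < INR (N - 1)) by (apply lt_0_INR; lia).
  eapply Rle_trans.
  { apply (impulse_energy_le N (lapB N b) S kP tP kQ tQ bbar alpha ltac:(lia) (lapB_sym N b)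
             (lapB_rowsum N b) HSsym HSsq HkP HtP HkQ HtQ Hbb Ha (2 * bmean N b) Phi G);
      try assumption.
    apply Rlt_le. unfold bmean. apply Rmult_lt_0_compat; [lra | now apply Rdiv_lt_0_compat]. }
  rewrite rsum_lapB_diag, Hn1. unfold bmean.
  rewrite h2_bound_closed_form; try lra. now apply cQ_pos.
Qed.

Theorem theorem4 (N : nat) (b : nat -> R) (S : Mat)
  (kP tP kQ tQ bbar alpha : R) :
  (2 <= N)%nat ->
  (forall i, (i < N - 1)%nat -> 0 < b i) ->
  0 < kP -> 0 < tP -> 0 < kQ -> 0 < tQ -> 0 <= bbar -> 0 < alpha ->
  is_psd_sqrt N (lapB N b) S ->
  (exists v, H_is_H2sq N b S kP tP kQ tQ bbar alpha v) /\
  (forall v, H_is_H2sq N b S kP tP kQ tQ bbar alpha v ->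
     v <= alpha / 2 * INR (N - 1) *
          (1 / kP + 1 / (tQ * (cQ kQ bbar / (2 * bmean N b) + kQ)))).
Proof.
  intros HN Hb HkP HtP HkQ HtQ Hbb Ha Hpsd.
  pose proof (path_impulse_energy_le N b S kP tP kQ tQ bbar alpha) as Hbound.
  split.
  - destruct (exp_flow_exists (3 * N) (sysA N (lapB N b) kP tP kQ tQ bbar)) as [Phi Hflow].
    set (f := impulse_sq (3 * N) (2 * N) (2 * N) (sysA N (lapB N b) kP tP kQ tQ bbar)
                (sysB N tP tQ) (sysC N S alpha) Phi).
    destruct (antiderivative_exists f) as [G [HG0 HG]]; [intros; now apply impulse_sq_continuous|].
    destruct (nondecreasing_bounded_cvg G _
                (nondecreasing_of_derivative_nonneg G f HG (impulse_sq_nonneg _ _ _ _ _ _ _))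
                (Hbound Phi G HN Hb HkP HtP HkQ HtQ Hbb Ha Hpsd Hflow HG0 HG)) as [v Hv].
    exists v, Phi. split; [assumption|]. exists G. auto.
  - intros v [Phi [Hflow [G [HG0 [HG Hlim]]]]].
    exact (cvg_le_of_bounded G v _ Hlim
             (Hbound Phi G HN Hb HkP HtP HkQ HtQ Hbb Ha Hpsd Hflow HG0 HG)).
Qed.
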